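(* Let $d\ge1$ and let $c_1\ge c_2\ge\cdots\ge c_d\ge 0$ be real numbers. Define $\nu\in\mathbb R^{2\times\cdots\times2}$ with binary indices $i_1,\dots,i_d\in\{0,1\}$ by $\nu(i_1,\dots,i_d)=\max\{c_k: i_k=1\}$ if some $i_k=1$, and $\nu(0,\dots,0)=0$. Then $\nu$ admits an exact TT-decomposition all of whose TT-ranks are at most $2$. *)

From HB Require Import structures.
From mathcomp Require Import all_boot all_order all_algebra.
From mathcomp Require Import reals.
Set Implicit Arguments. Unset Strict Implicit. Unset Printing Implicit Defensive.
Import Order.TTheory GRing.Theory Num.Theory.
Local Open Scope ring_scope.

Fixpoint ttchain (R : pzRingType) (r : nat -> nat)
  (G : forall k : nat, 'M[R]_(r k, r k.+1)) (k n : nat)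
  : 'M[R]_(r k, r (n + k)%N) :=
  match n return 'M[R]_(r k, r (n + k)%N) with
  | 0 => 1%:M
  | n'.+1 => ttchain G k n' *m G (n' + k)%N
  end.

(* With boundary ranks
   r 0 = r d = 1 the product is a 1x1 matrix; the double sum just reads
   off its unique entry. *)
Definition tt_eval (R : pzRingType) (d : nat) (r : nat -> nat)
  (G : forall k : nat, bool -> 'M[R]_(r k, r k.+1)) (i : d.-tuple bool) : R :=
  let M := ttchain (fun k => G k (nth false i k)) 0 d in
  \sum_(a < r 0%N) \sum_(b < r (d + 0)%N) M a b.

Definition has_TT_ranks_le2 (R : pzRingType) (d : nat)
  (nu : d.-tuple bool -> R) : Prop :=
  exists r : nat -> nat,
    r 0%N = 1%N /\ r d = 1%N /\ (forall k, (0 < k < d)%N -> (r k <= 2)%N) /\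
    exists G : forall k : nat, bool -> 'M[R]_(r k, r k.+1),
      forall i : d.-tuple bool, nu i = tt_eval G i.

(* nu(i_1..i_d) = max{c_k : i_k = 1} if some i_k = 1, and 0 otherwise
   (index value 1 is encoded as true). *)
Definition nu_tensor (R : realType) (d : nat) (c : 'I_d -> R)
  (i : d.-tuple bool) : R :=
  if [exists k : 'I_d, tnth i k]
  then \big[Num.max/0]_(k < d | tnth i k) c k
  else 0.

From HB Require Import structures.
From mathcomp Require Import all_boot all_order all_algebra.
From mathcomp Require Import reals.
Set Implicit Arguments. Unset Strict Implicit. Unset Printing Implicit Defensive.
Import Order.TTheory GRing.Theory Num.Theory.
Local Open Scope ring_scope.

(* The cores are the transfer matrices of a two-state automaton reading
   i_1, ..., i_d: state [false] means "no index equal to 1 read yet", state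
   [true] carries the running maximum. Reading a 0 keeps the state; reading
   i_k = 1 moves state [false] to [true] with weight c_k and keeps state [true]
   with weight 1, which is correct because the c_k decrease, so the first
   1 read carries the maximum. The left boundary bond only has state [false]
   and the right one only state [true], so all inner bonds have rank 2. *)

Definition bond_rank (d k : nat) : nat :=
  if (k == 0%N) || (k == d) then 1%N else 2%N.

Definition bond_state (d k j : nat) : bool :=
  if k == 0%N then false else if k == d then true else j == 1%N.

Lemma sum_bond_state (V : nmodType) (d k : nat) (f : bool -> V) :
  (k < d)%N -> (k = 0%N -> f true = 0) ->
  \sum_(m < bond_rank d k) f (bond_state d k m) = f false + f true.
Proof.
move=> lt_kd k0_f.
rewrite -(big_mkord xpredT (fun m => f (bond_state d k m))).
have [k0|k_neq0] := eqVneq k 0%N.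
  by rewrite k0 /bond_rank /= big_nat1 /bond_state /= k0_f // addr0.
rewrite /bond_rank /bond_state (negPf k_neq0) (ltn_eqF lt_kd) /=.
by rewrite !big_nat_recr //= big_geq // add0r.
Qed.

Section StateCores.
Variables (R : pzRingType) (d : nat).

Definition state_core (W : nat -> bool -> bool -> R) (k : nat)
  : 'M[R]_(bond_rank d k, bond_rank d k.+1) :=
  \matrix_(p, q) W k (bond_state d k p) (bond_state d k.+1 q).

Fixpoint forward (W : nat -> bool -> bool -> R) (n : nat) (s : bool) : R :=
  match n with
  | 0 => (~~ s)%:R
  | n'.+1 => forward W n' false * W n' false s + forward W n' true * W n' true s
  end.

Lemma ttchain_state_core W n : (n <= d)%N ->
  forall (p : 'I_(bond_rank d 0)) (q : 'I_(bond_rank d (n + 0))),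
  ttchain (state_core W) 0 n p q = forward W n (bond_state d (n + 0) q).
Proof.
elim: n => [|n IH] le_nd p q.
  have rank0 (x : 'I_(bond_rank d 0)) : val x = 0%N.
    by case: x => -[|m] //=; rewrite /bond_rank eqxx.
  by rewrite /= mxE /bond_state /= (val_inj (etrans (rank0 p) (esym (rank0 q)))) eqxx.
rewrite /= mxE.
under eq_bigr => m _ do rewrite IH ?(ltnW le_nd) // mxE.
rewrite (@sum_bond_state _ _ _
  (fun s => forward W n s * W (n + 0)%N s (bond_state d (n + 0).+1 q))).
- by move: (nat_of_ord q) => j; rewrite !addn0.
- by rewrite addn0.
- by move: (nat_of_ord q) => j; rewrite addn0 => ->; rewrite mul0r.
Qed.

Lemma tt_eval_state_core (w : nat -> bool -> bool -> bool -> R)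
  (i : d.-tuple bool) : (0 < d)%N ->
  tt_eval (fun k b => state_core (fun k' => w k' b) k) i
  = forward (fun k => w k (nth false i k)) d true.
Proof.
move=> d_gt0; rewrite /tt_eval /=.
have state_d (b : 'I_(bond_rank d (d + 0))) : bond_state d (d + 0) b = true.
  by move: (nat_of_ord b) => j; rewrite addn0 /bond_state (gtn_eqF d_gt0) eqxx.
under eq_bigr => a _ do under eq_bigr => b _
  do rewrite (ttchain_state_core (fun k => w k (nth false i k))) // state_d.
by rewrite !sumr_const !card_ord addn0 /bond_rank eqxx orbT /= !mulr1n.
Qed.

End StateCores.

Section RunningMax.
Variables (R : realType) (d : nat) (c : 'I_d -> R) (t : d.-tuple bool).

Definition c_nat (k : nat) : R := if insub k is Some o then c o else 0.

Definition running_max_step (ck : R) (b s0 s : bool) : R :=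
  if b then (if s then (if s0 then 1 else ck) else 0) else (s0 == s)%:R.

Definition prefix_hit (n : nat) : bool := [exists k : 'I_d, (k < n)%N && tnth t k].

Definition prefix_max (n : nat) : R :=
  \big[Num.max/0]_(k < d | (k < n)%N && tnth t k) c k.

Lemma prefix_predS (o k : 'I_d) :
  ((k < o.+1)%N && tnth t k) = ((k < o)%N && tnth t k) || ((k == o) && tnth t o).
Proof.
rewrite ltnS leq_eqVlt; have [->|k_neq_o] := eqVneq k o; first by rewrite ltnn eqxx.
by rewrite orbF -[_ == _]/(k == o :> 'I_d) (negPf k_neq_o).
Qed.

Lemma prefix_hitS (o : 'I_d) : prefix_hit o.+1 = prefix_hit o || tnth t o.
Proof.
apply/existsP/orP => [[k]|[/existsP[k hit_k]|t_o]].
- by rewrite prefix_predS => /orP[hit_k|/andP[_ ->]];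
    [left; apply/existsP; exists k | right].
- by exists k; rewrite prefix_predS hit_k.
- by exists o; rewrite prefix_predS eqxx t_o orbT.
Qed.

Lemma prefix_max_nohit n : ~~ prefix_hit n -> prefix_max n = 0.
Proof.
move=> nohit; rewrite /prefix_max bigmax_eq_id // => k hit_k.
by case/existsP: nohit; exists k.
Qed.

Hypothesis c_decr : forall k l : 'I_d, (k <= l)%N -> c l <= c k.
Hypothesis c_ge0 : forall k : 'I_d, 0 <= c k.

Lemma prefix_maxS (o : 'I_d) : prefix_max o.+1 =
  if tnth t o then (if prefix_hit o then prefix_max o else c o) else prefix_max o.
Proof.
rewrite /prefix_max; case t_o: (tnth t o); last first.
  by apply: eq_bigl => k; rewrite prefix_predS t_o andbF orbF.
rewrite (bigmaxD1 o) ?prefix_predS ?eqxx ?t_o ?orbT //.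
have -> : \big[Num.max/0]_(k < d | ((k < o.+1)%N && tnth t k) && (k != o)) c k
          = prefix_max o.
  apply: eq_bigl => k; rewrite prefix_predS t_o andbT.
  by case: eqVneq => [->|_]; rewrite ?ltnn ?orbF ?andbT.
case: ifP => [/existsP[k /andP[lt_ko t_k]]|/negbT nohit].
  apply/max_idPr; apply: (@bigmax_sup _ _ _ _ k); first by rewrite lt_ko t_k.
  exact/c_decr/ltnW.
by rewrite prefix_max_nohit //; apply/max_idPl.
Qed.

Lemma forward_running_max n : (n <= d)%N ->
  let W k := running_max_step (c_nat k) (nth false t k) in
  forward W n false = (~~ prefix_hit n)%:R /\ forward W n true = prefix_max n.
Proof.
elim: n => [|n IH] le_nd W.
  have nohit0 : prefix_hit 0 = false by apply/existsP => -[].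
  by rewrite /= nohit0 prefix_max_nohit ?nohit0.
have [IH_false IH_true] := IH (ltnW le_nd).
pose o := Ordinal le_nd.
have t_o : nth false t n = tnth t o by rewrite (tnth_nth false).
have c_o : c_nat n = c o by rewrite /c_nat -[n]/(val o) valK.
rewrite /= /W t_o c_o IH_false IH_true (prefix_hitS o) (prefix_maxS o) /running_max_step.
rewrite -[prefix_hit n]/(prefix_hit o).
case: (tnth t o); case hit_o: (prefix_hit o);
  rewrite /= ?mulr0 ?mulr1 ?mul0r ?mul1r ?addr0 ?add0r; split => //.
by rewrite prefix_max_nohit ?addr0 //; apply/negbT.
Qed.

Lemma nu_tensor_prefix_max : nu_tensor c t = prefix_max d.
Proof.
rewrite /nu_tensor; case: ifP => [_|/negbT nohit].
  by apply: eq_bigl => k; rewrite ltn_ord.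
rewrite prefix_max_nohit //; apply: contra nohit => /existsP[k /andP[_ t_k]].
by apply/existsP; exists k.
Qed.

End RunningMax.

Theorem mainTheorem5 (R : realType) (d : nat) (hd : (1 <= d)%N)
  (c : 'I_d -> R)
  (hdec : forall k l : 'I_d, (k <= l)%N -> c l <= c k)
  (hnn : forall k : 'I_d, 0 <= c k) :
  has_TT_ranks_le2 (nu_tensor c).
Proof.
exists (bond_rank d); split; first by rewrite /bond_rank eqxx.
split; first by rewrite /bond_rank eqxx orbT.
split; first by move=> k _; rewrite /bond_rank; case: ifP.
exists (fun k b => state_core d (fun k' => running_max_step (c_nat c k') b) k) => i.
rewrite tt_eval_state_core //.
have [_ ->] := forward_running_max i hdec hnn (leqnn d).
exact: nu_tensor_prefix_max.
Qed.
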